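(* For every $n\ge1$ and every lattice congruence $R$ of the weak order on $S_n$, every vertex of the quotient graph $Q_R$ has degree at most $2n-\lceil 2\sqrt n\,\rceil$. Moreover, for every $n\ge1$ there is a lattice congruence $R$ of the weak order on $S_n$ such that $Q_R$ has a vertex of degree exactly $2n-\lceil2\sqrt n\,\rceil$.
   Context: $S_n$ is the set of permutations of $[n]$ with the weak order: $\pi\le\rho$ iff $\mathrm{inv}(\pi)\subseteq\mathrm{inv}(\rho)$, where $\mathrm{inv}(a_1\cdots a_n)=\{(a_i,a_j):i<j,\ a_i>a_j\}$. A lattice congruence is an equivalence relation compatible with joins and meets. The quotient graph $Q_R$ is the undirected cover graph of the lattice quotient $S_n/R$, whose elements are the classes, ordered by $X<Y$ iff $x<y$ for some $x\in X$, $y\in Y$. *)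

From mathcomp Require Import all_boot all_fingroup.
Set Implicit Arguments. Unset Strict Implicit. Unset Printing Implicit Defensive.

(* Permutations of [n] are {perm 'I_n}; one-line notation a_i = s i. *)
Definition inv_set (n : nat) (s : {perm 'I_n}) : {set 'I_n * 'I_n} :=
  [set p : 'I_n * 'I_n | [exists i : 'I_n, exists j : 'I_n,
     [&& (i < j)%N, (s j < s i)%N & p == (s i, s j)]]].

Definition weak_le n (s t : {perm 'I_n}) : bool := inv_set s \subset inv_set t.
Definition weak_lt n (s t : {perm 'I_n}) : bool := (s != t) && weak_le s t.

Definition is_join n (x y j : {perm 'I_n}) : Prop :=
  [/\ weak_le x j, weak_le y j &
      forall u, weak_le x u -> weak_le y u -> weak_le j u].
Definition is_meet n (x y m : {perm 'I_n}) : Prop :=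
  [/\ weak_le m x, weak_le m y &
      forall u, weak_le u x -> weak_le u y -> weak_le u m].

Definition lattice_congruence n (R : rel {perm 'I_n}) : Prop :=
  [/\ reflexive R, symmetric R, transitive R,
      (forall x y z jx jy, R x y -> is_join x z jx -> is_join y z jy -> R jx jy) &
      (forall x y z mx my, R x y -> is_meet x z mx -> is_meet y z my -> R mx my)].

Definition cls n (R : rel {perm 'I_n}) (x : {perm 'I_n}) : {set {perm 'I_n}} :=
  [set y | R x y].
Definition is_class n (R : rel {perm 'I_n}) (X : {set {perm 'I_n}}) : bool :=
  [exists x, X == cls R x].

Definition qlt n (X Y : {set {perm 'I_n}}) : bool :=
  (X != Y) && [exists x in X, exists y in Y, weak_lt x y].

Definition qcover n (R : rel {perm 'I_n}) (X Y : {set {perm 'I_n}}) : bool :=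
  [&& is_class R X, is_class R Y, qlt X Y &
      ~~ [exists Z, [&& is_class R Z, qlt X Z & qlt Z Y]]].

Definition qdeg n (R : rel {perm 'I_n}) (X : {set {perm 'I_n}}) : nat :=
  #|[set Y | qcover R X Y || qcover R Y X]|.

(* ceil (2 sqrt n) = least k with 4n <= k^2 *)
Lemma ceil2sqrt_ex (n : nat) : exists k, 4 * n <= k * k.
Proof.
exists (4 * n). case: n => [|n] //.
by rewrite leq_pmulr.
Qed.

Definition ceil_2sqrt (n : nat) : nat := ex_minn (ceil2sqrt_ex n).

(** Compatibility with meets gives a class [X] of a lattice
   congruence a least element [a], and each lower cover of [X] in the quotient is
   the class of a permutation obtained from [a] by undoing one of its descents;
   dually the upper covers are bounded by the ascents of the greatest element [b].
   As [a <= b], recording for each value the number of ascents of [a] and of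
   descents of [b] to its left is injective, so [n <= (asc a + 1) (des b + 1)].
   With [des + asc <= n - 1] this gives
   [deg X <= 2n - 2 - (asc a + des b) <= 2n - ceil (2 sqrt n)].

   Choose [p q] with [n <= p q] and [p + q = ceil (2 sqrt n)],
   and identify permutations having the same inversions among pairs of values at
   distance at most [q].  The class of the permutation listing the blocks of [q]
   consecutive values in increasing order, each block decreasingly, also contains
   the one listing the residues mod [q] decreasingly, each residue class
   increasingly.  Undoing the [n - p] adjacent inversions inside blocks of the
   first, and inverting the [n - q] adjacent pairs [v, v + q] of the second, yield
   [n - p] lower and [n - q] upper covers. *)

From mathcomp Require Import all_boot all_fingroup zify.
Set Implicit Arguments. Unset Strict Implicit. Unset Printing Implicit Defensive.

Definition strict_total (T : eqType) (L : rel T) : Prop :=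
  [/\ irreflexive L, transitive L & forall x y, x != y -> L x y || L y x].

Section StrictTotal.
Variables (T : eqType) (L : rel T).
Hypothesis HL : strict_total L.

Lemma strict_total_asym x y : L x y -> ~~ L y x.
Proof.
case: HL => irr tr _ lxy; apply/negP => lyx.
by have := tr _ _ _ lxy lyx; rewrite irr.
Qed.

Lemma strict_total_neq x y : L x y -> x != y.
Proof. by case: HL => irr _ _ lxy; apply: contraTneq lxy => ->; rewrite irr. Qed.

Lemma strict_total_negE x y : x != y -> L x y = ~~ L y x.
Proof.
case: HL => _ _ tot nxy; apply/idP/idP; first exact: strict_total_asym.
by case/orP: (tot _ _ nxy) => // ->.
Qed.

Lemma strict_total_flip : strict_total (fun x y => L y x).
Proof.
case: HL => irr tr tot; split => // [y x z h1 h2|x y nxy]; first exact: tr h2 h1.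
by rewrite orbC tot.
Qed.

End StrictTotal.

Lemma card_predecessors_lt (T : finType) (B : rel T) : strict_total B ->
  forall x y, (#|[pred w | B w x]| < #|[pred w | B w y]|) = B x y.
Proof.
move=> HB; have [irr tr tot] := HB.
have lt_card x y : B x y -> #|[pred w | B w x]| < #|[pred w | B w y]|.
  move=> bxy; apply/proper_card/properP; split; last by exists x; rewrite !inE ?irr.
  by apply/subsetP => w; rewrite !inE => /tr; apply.
move=> x y; apply/idP/idP => [lt|]; last exact: lt_card.
have nxy : x != y by apply: contraTneq lt => ->; rewrite ltnn.
by case/orP: (tot _ _ nxy) => // /lt_card; rewrite ltnNge (ltnW lt).
Qed.

Lemma card_ord_lt n k : k <= n -> #|[pred i : 'I_n | i < k]| = k.
Proof.
move=> kn; have wi : injective (widen_ord kn) by move=> i j /(congr1 val) /= /val_inj.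
rewrite -[RHS]card_ord -(card_imset _ wi).
apply: eq_card => i; rewrite !inE; apply/idP/imsetP => [ik|[j _ ->]] //=.
by exists (Ordinal ik) => //; apply: val_inj.
Qed.

Lemma card_le_in_inj (T T' : finType) (U : {pred T}) (S : {pred T'}) (F : T -> T') :
  {in U &, injective F} -> {in U, forall u, F u \in S} -> #|U| <= #|S|.
Proof.
move=> Finj FS; rewrite -(card_in_imset Finj); apply/subset_leq_card/subsetP.
by move=> _ /imsetP [u uU ->]; apply: FS.
Qed.

Lemma setD1_inj (T : finType) (A : {set T}) x y :
  x \in A -> A :\ x = A :\ y -> x = y.
Proof.
move=> xA e; apply/eqP; apply: contraT => nxy.
by have := setD11 x A; rewrite e in_setD1 nxy xA.
Qed.

Lemma setU1_inj (T : finType) (A : {set T}) x y :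
  x \notin A -> x |: A = y |: A -> x = y.
Proof.
move=> xA e; have := setU11 x A; rewrite e in_setU1 (negbTE xA) orbF.
by move/eqP.
Qed.

Definition precedes n (s : {perm 'I_n}) : rel 'I_n :=
  fun x y => (s^-1%g x < s^-1%g y)%N.

Section Precedes.
Variable n : nat.
Implicit Types (s t : {perm 'I_n}) (x y : 'I_n).

Lemma strict_total_precedes s : strict_total (precedes s).
Proof.
split=> [x|y x z|x y]; rewrite /precedes ?ltnn //; first exact: ltn_trans.
by case: ltngtP => // /val_inj/perm_inj ->; rewrite eqxx.
Qed.

Lemma precedes_cotrans s u v w : precedes s u w -> precedes s u v || precedes s v w.
Proof. by rewrite /precedes => uw; case: ltnP => //= /leq_ltn_trans; apply. Qed.

Lemma card_predecessors_precedes s x : #|[pred w | precedes s w x]| = s^-1%g x.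
Proof.
rewrite -[RHS](card_ord_lt (ltnW (ltn_ord (s^-1%g x)))).
rewrite -[RHS](card_imset _ (@perm_inj _ s)); apply: eq_card => w; rewrite !inE.
apply/idP/imsetP => [h|[i]]; first by exists (s^-1%g w); rewrite ?permKV.
by rewrite inE => h ->; rewrite /precedes permK.
Qed.

Lemma precedes_inj s t : precedes s =2 precedes t -> s = t.
Proof.
move=> e; apply: invg_inj; apply/permP => x; apply: val_inj => /=.
by rewrite -!card_predecessors_precedes; apply: eq_card => w; rewrite !inE e.
Qed.

Lemma precedes_surj (B : rel 'I_n) : strict_total B -> exists s, precedes s =2 B.
Proof.
move=> HB; have [irr _ tot] := HB.
pose r x := #|[pred w | B w x]|.
have r_lt x : r x < n.
  rewrite -[n]card_ord (cardD1 x) ltnS; apply/subset_leq_card/subsetP => w.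
  by rewrite !inE andbT; apply: contraTneq => ->; rewrite irr.
pose f x : 'I_n := Ordinal (r_lt x).
have f_inj : injective f.
  move=> x y /(congr1 val) /= e; apply: contraTeq isT => nxy.
  by case/orP: (tot _ _ nxy); rewrite -(card_predecessors_lt HB) -/(r x) -/(r y) e ltnn.
by exists (perm f_inj)^-1%g => x y; rewrite /precedes invgK !permE card_predecessors_lt.
Qed.

End Precedes.

(** * The weak order relative to a total order on values *)

Definition ord_lt n : rel 'I_n := fun x y => (x < y)%N.
Definition ord_gt n : rel 'I_n := fun x y => (y < x)%N.

Lemma strict_total_ord_lt n : strict_total (@ord_lt n).
Proof.
split=> [x|y x z|x y]; rewrite /ord_lt ?ltnn //; first exact: ltn_trans.
by rewrite -val_eqE /=; case: ltngtP.
Qed.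

Lemma strict_total_ord_gt n : strict_total (@ord_gt n).
Proof. exact: strict_total_flip (strict_total_ord_lt n). Qed.

(** The weak order relative to a reference total order [L] on values: [s] is
   below [t] when every [L]-ordered pair of values that [s] lists in that order
   is also listed in that order by [t].  [L = ord_gt] gives the weak order and
   [L = ord_lt] its dual, so one argument covers joins and meets, and upper and
   lower covers. *)
Definition rinv_set n (L : rel 'I_n) (s : {perm 'I_n}) : {set 'I_n * 'I_n} :=
  [set p | L p.1 p.2 && precedes s p.1 p.2].

Definition rweak_le n (L : rel 'I_n) (s t : {perm 'I_n}) : bool :=
  rinv_set L s \subset rinv_set L t.

Section RelativeWeakOrder.
Variables (n : nat) (L : rel 'I_n).
Implicit Types (s t : {perm 'I_n}).

Lemma rweak_leP s t :
  reflect (forall x y, L x y -> precedes s x y -> precedes t x y) (rweak_le L s t).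
Proof.
apply: (iffP subsetP) => [h x y lxy sxy | h [x y]]; last first.
  by rewrite !inE /= => /andP [lxy /(h _ _ lxy)]; rewrite lxy.
by have := h (x, y); rewrite !inE /= lxy sxy => /(_ isT).
Qed.

Lemma rweak_le_refl s : rweak_le L s s.
Proof. exact: subxx. Qed.

Hypothesis HL : strict_total L.

Lemma rinv_set_inj : injective (rinv_set L).
Proof.
move=> s t e; have [_ _ tot] := HL.
have agree x y : L x y -> precedes s x y = precedes t x y.
  by move=> lxy; move/setP/(_ (x, y)): e; rewrite !inE /= lxy.
apply: precedes_inj => x y; have [->|nxy] := eqVneq x y.
  by rewrite /precedes !ltnn.
case/orP: (tot _ _ nxy) => [|lyx]; first exact: agree.
rewrite !(strict_total_negE (strict_total_precedes _) nxy).
by rewrite agree.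
Qed.

Lemma rweak_le_anti s t : rweak_le L s t -> rweak_le L t s -> s = t.
Proof.
by move=> st ts; apply: rinv_set_inj; apply/eqP; rewrite eqEsubset; apply/andP.
Qed.

End RelativeWeakOrder.

Lemma rweak_le_flip n (L : rel 'I_n) (s t : {perm 'I_n}) : strict_total L ->
  rweak_le (fun x y => L y x) s t = rweak_le L t s.
Proof.
move=> HL.
have neg_precedes w x y : y != x -> ~~ precedes w x y = precedes w y x.
  by move=> nyx; rewrite (strict_total_negE (strict_total_precedes w) nyx).
apply/rweak_leP/rweak_leP => h x y lxy; apply: contraTT.
- have nyx : y != x by rewrite eq_sym (strict_total_neq HL lxy).
  by rewrite !neg_precedes //; apply: h.
- by rewrite !neg_precedes ?(strict_total_neq HL lxy) //; apply: h.
Qed.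

Lemma inv_set_gt n (s : {perm 'I_n}) : inv_set s = rinv_set (@ord_gt n) s.
Proof.
apply/setP => -[x y]; rewrite !inE /ord_gt /=; apply/existsP/idP.
- case=> i /existsP [j /and3P [ij sji /eqP [-> ->]]].
  by rewrite sji /precedes !permK.
- case/andP=> yx sxy; exists (s^-1%g x); apply/existsP; exists (s^-1%g y).
  by rewrite !permKV yx eqxx !andbT; exact: sxy.
Qed.

Lemma weak_le_gt n (s t : {perm 'I_n}) : weak_le s t = rweak_le (@ord_gt n) s t.
Proof. by rewrite /weak_le !inv_set_gt. Qed.

Lemma rweak_le_lt n (s t : {perm 'I_n}) : rweak_le (@ord_lt n) s t = weak_le t s.
Proof. by rewrite weak_le_gt -(rweak_le_flip _ _ (strict_total_ord_lt n)). Qed.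

(** [is_join] and [is_meet] are least upper bounds for the weak order and for
   its converse. *)
Definition is_lub (T : Type) (le : rel T) (x z j : T) : Prop :=
  [/\ le x j, le z j & forall u, le x u -> le z u -> le j u].

Lemma eq_is_lub (T : Type) (le le' : rel T) x z j :
  le =2 le' -> is_lub le x z j <-> is_lub le' x z j.
Proof.
have lub_of le1 le2 : le1 =2 le2 -> is_lub le1 x z j -> is_lub le2 x z j.
  by move=> e [h1 h2 h3]; split=> [||u]; rewrite -!e //; apply: h3.
by move=> e; split; apply: lub_of.
Qed.

(** * Joins *)

Lemma path_last_rel (T : Type) (e L : rel T) : transitive L -> subrel e L ->
  forall p u, path e u p -> u = last u p \/ L u (last u p).
Proof.
move=> trL eL; elim=> [|y p IH] u /=; first by left.
case/andP=> /eL Luy /IH [<-|Lyl]; right => //; exact: trL Lyl.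
Qed.

Lemma connect_rel (T : finType) (e L : rel T) : transitive L -> subrel e L ->
  forall u v, connect e u v -> u = v \/ L u v.
Proof. by move=> trL eL u v /connectP [p pp ->]; apply: path_last_rel pp. Qed.

(** For the join of [x] and [z], an [L]-ordered pair is in order exactly when it
   is linked by a path of pairs that [x] or [z] keeps in order; [join_order]
   completes this to a total order. *)
Definition join_edge n (L : rel 'I_n) (x z : {perm 'I_n}) : rel 'I_n :=
  fun u v => L u v && (precedes x u v || precedes z u v).

Definition join_order n (L : rel 'I_n) (x z : {perm 'I_n}) : rel 'I_n :=
  fun u v => if L u v then connect (join_edge L x z) u v
             else (u != v) && ~~ connect (join_edge L x z) v u.

Section Join.
Variables (n : nat) (L : rel 'I_n) (x z : {perm 'I_n}).
Hypothesis HL : strict_total L.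
Local Notation E := (join_edge L x z).
Local Notation S := (connect (join_edge L x z)).

Lemma join_edge_cotrans u v w : L u v -> L v w -> S u w -> S u v || S v w.
Proof.
have [irr trL tot] := HL.
move=> Luv Lvw /connectP [p pp ew]; rewrite {w}ew in Lvw *.
elim: p u pp Luv Lvw => [|y p IH] u /=.
  by move=> _ Luv Lvu; have := trL _ _ _ Luv Lvu; rewrite irr.
case/andP=> Euy py Luv Lvl; have [->|nvy] := eqVneq v y; first by rewrite connect1.
case/orP: (tot _ _ nvy) => [Lvy|Lyv]; last first.
  case/orP: (IH _ py Lyv Lvl) => [Syv|->]; last by rewrite orbT.
  by rewrite (connect_trans (connect1 Euy) Syv).
have Syl := path_connect py (mem_last y p).
case/andP: Euy => Luy /orP [] /(precedes_cotrans v) /orP [] xz.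
- by rewrite connect1 // /join_edge Luv xz.
- by rewrite (connect_trans _ Syl) ?orbT // connect1 // /join_edge Lvy xz.
- by rewrite connect1 // /join_edge Luv xz orbT.
- by rewrite (connect_trans _ Syl) ?orbT // connect1 // /join_edge Lvy xz orbT.
Qed.

Let join_orderL u v : L u v -> join_order L x z u v = S u v.
Proof. by rewrite /join_order => ->. Qed.

Let join_orderR u v : L v u -> join_order L x z u v = ~~ S v u.
Proof.
move=> Lvu; rewrite /join_order (negbTE (strict_total_asym HL Lvu)).
by rewrite eq_sym (strict_total_neq HL Lvu).
Qed.

Lemma join_order_trans : transitive (join_order L x z).
Proof.
have [irr trL tot] := HL.
have cyc a b c : L a b -> L b c -> L c a -> False.
  by move=> Lab Lbc Lca; have := trL _ _ _ (trL _ _ _ Lab Lbc) Lca; rewrite irr.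
have neq a b : join_order L x z a b -> a != b.
  by rewrite /join_order; case: ifP => [/(strict_total_neq HL)|_ /andP []].
move=> v u w Juv Jvw.
have [euw|nuw] := eqVneq u w.
  rewrite -{w}euw in Jvw *; case/tot/orP: (neq _ _ Juv) => [Luv|Lvu].
  - by rewrite (join_orderL Luv) in Juv; rewrite (join_orderR Luv) Juv in Jvw.
  - by rewrite (join_orderL Lvu) in Jvw; rewrite (join_orderR Lvu) Jvw in Juv.
case/tot/orP: (neq _ _ Juv) => Luv; case/tot/orP: (neq _ _ Jvw) => Lvw;
  case/tot/orP: nuw => Luw;
  try by [case: (cyc _ _ _ Luv Lvw Luw) | case: (cyc _ _ _ Luw Lvw Luv)].
all: rewrite ?(join_orderL Luv) ?(join_orderR Luv) in Juv.
all: rewrite ?(join_orderL Lvw) ?(join_orderR Lvw) in Jvw.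
all: rewrite ?(join_orderL Luw) ?(join_orderR Luw).
(* The six orientations of [u], [v], [w] under [L] that are not cyclic. *)
- exact: connect_trans Juv Jvw.
- by case/orP: (join_edge_cotrans Luw Lvw Juv) => // Swv; rewrite Swv in Jvw.
- by apply: contra Jvw => Swu; apply: connect_trans Swu Juv.
- by case/orP: (join_edge_cotrans Luv Luw Jvw) => // Svu; rewrite Svu in Juv.
- by apply: contra Juv => Swu; apply: connect_trans Jvw Swu.
- apply/negP => /(join_edge_cotrans Lvw Luv) /orP [Swv|Svu].
  + by rewrite Swv in Jvw.
  + by rewrite Svu in Juv.
Qed.

Lemma strict_total_join_order : strict_total (join_order L x z).
Proof.
have [irr _ tot] := HL; split; last 2 first.
- exact: join_order_trans.
- move=> u v /tot/orP [Luv|Luv]; rewrite (join_orderL Luv) (join_orderR Luv).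
  + by case: (S u v).
  + by case: (S v u).
by move=> u; rewrite /join_order irr eqxx.
Qed.

Lemma rjoin_ex : exists j, is_lub (rweak_le L) x z j /\
  forall u v, L u v -> precedes j u v = S u v.
Proof.
have [j ej] := precedes_surj strict_total_join_order.
have jS u v : L u v -> precedes j u v = S u v by move=> Luv; rewrite ej join_orderL.
exists j; split=> //; split.
- by apply/rweak_leP => u v Luv xuv; rewrite jS // connect1 // /join_edge Luv xuv.
- by apply/rweak_leP => u v Luv zuv; rewrite jS // connect1 // /join_edge Luv zuv orbT.
move=> t /rweak_leP xt /rweak_leP zt; apply/rweak_leP => u v Luv; rewrite jS // => Suv.
have Et : subrel E (precedes t).
  by move=> a b /andP [Lab /orP []]; [apply: xt | apply: zt].
have [_ trt _] := strict_total_precedes t.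
case: (connect_rel trt Et Suv) => // euv.
by move: Luv; rewrite euv; case: HL => ->.
Qed.

Lemma rjoin_precedes j : is_lub (rweak_le L) x z j ->
  forall u v, L u v -> precedes j u v = S u v.
Proof.
case=> xj zj jmin; have [j' [[xj' zj' jmin'] ej']] := rjoin_ex.
by have -> : j = j' by apply: (rweak_le_anti HL); [apply: jmin | apply: jmin'].
Qed.

End Join.

Lemma rmeet_ex n (L : rel 'I_n) (x z : {perm 'I_n}) : strict_total L ->
  exists m, is_lub (fun a b => rweak_le L b a) x z m.
Proof.
move=> HL; have [m [mlub _]] := rjoin_ex x z (strict_total_flip HL).
by exists m; apply/(eq_is_lub _ _ _ (fun a b => rweak_le_flip a b HL)).
Qed.

(** * Adjacent transpositions and covers *)

Definition ord_succ n (i : 'I_n) : 'I_n := insubd i i.+1.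

Lemma ord_succE n (i : 'I_n) : i.+1 < n -> ord_succ i = i.+1 :> nat.
Proof. by move=> h; rewrite /ord_succ val_insubd h. Qed.

Lemma chain_adjacent (T : Type) (R : rel T) n (f : 'I_n -> T) : transitive R ->
  forall p q : 'I_n, (p < q)%N ->
  (forall k : 'I_n, (p <= k < q)%N -> R (f k) (f (ord_succ k))) -> R (f p) (f q).
Proof.
move=> trR p [q qn]; elim: q qn => [//|q IH] Sqn /= pSq steps.
have qn : q < n := ltnW Sqn.
have Rq : R (f (Ordinal qn)) (f (Ordinal Sqn)).
  have -> : Ordinal Sqn = ord_succ (Ordinal qn).
    by apply: val_inj => /=; rewrite ord_succE.
  by apply: steps; rewrite /= -ltnS pSq ltnSn.
case: (ltngtP p q) => [pq|qp|pq].
- apply: trR Rq; apply: IH => // k /andP [pk kq]; apply: steps.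
  by rewrite pk ltnS ltnW.
- by move: pSq; rewrite ltnS leqNgt qp.
- by move: Rq; have -> : Ordinal qn = p by apply: val_inj.
Qed.

(** [swap_adj s i] exchanges the entries in positions [i] and [i + 1]. *)
Definition swap_adj n (s : {perm 'I_n}) (i : 'I_n) : {perm 'I_n} :=
  (tperm i (ord_succ i) * s)%g.

(** For [L = ord_gt] these are the descents of [a], for [L = ord_lt] its ascents. *)
Definition rdescents n (L : rel 'I_n) (a : {perm 'I_n}) : {set 'I_n} :=
  [set i : 'I_n | (i.+1 < n) && L (a i) (a (ord_succ i))].

Section AdjacentSwaps.
Variables (n : nat) (a : {perm 'I_n}) (i : 'I_n).
Hypothesis Si : i.+1 < n.
Local Notation i' := (ord_succ i).

Lemma precedes_adj : precedes a (a i) (a i').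
Proof. by rewrite /precedes !permK ord_succE. Qed.

Lemma precedes_swap_adj_pair : precedes (swap_adj a i) (a i) (a i') = false.
Proof.
rewrite /precedes /swap_adj invMg !permM !permK tpermV tpermL tpermR.
by rewrite ord_succE // ltnNge leqnSn.
Qed.

Lemma precedes_swap_adj x y : ~~ ((x == a i) && (y == a i')) ->
  ~~ ((x == a i') && (y == a i)) -> precedes (swap_adj a i) x y = precedes a x y.
Proof.
have eqV u j : (a^-1%g u == j) = (u == a j).
  by apply/eqP/eqP => [<-|->]; rewrite ?permKV ?permK.
rewrite /precedes /swap_adj invMg !permM tpermV -!eqV.
move: (a^-1%g x) (a^-1%g y) => p q.
have tpE r : tperm i i' r = if r == i then i' else if r == i' then i else r.
  by case: tpermP => [->|->|/eqP/negbTE-> /eqP/negbTE->]; rewrite ?eqxx //; case: eqP.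
rewrite !tpE !(fun_if (@nat_of_ord n)) -!val_eqE /= ord_succE //.
by repeat case: eqP => /= ?; lia.
Qed.

Lemma swap_adj_neq : swap_adj a i != a.
Proof. by apply: contraFneq precedes_swap_adj_pair => ->; apply: precedes_adj. Qed.

Variable L : rel 'I_n.
Hypothesis HL : strict_total L.

Lemma rweak_le_swap_adj : i \in rdescents L a -> rweak_le L (swap_adj a i) a.
Proof.
rewrite inE Si => Li; apply/rweak_leP => x y Lxy.
case: (boolP ((x == a i) && (y == a i'))) => [/andP [/eqP-> /eqP->]|h1].
  by rewrite precedes_swap_adj_pair.
case: (boolP ((x == a i') && (y == a i))) => [/andP [/eqP ex /eqP ey]|h2].
  by move: Lxy; rewrite ex ey (negbTE (strict_total_asym HL Li)).
by rewrite precedes_swap_adj.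
Qed.

Lemma rweak_le_swap_adj_below m : i \in rdescents L a -> rweak_le L m a ->
  ~~ precedes m (a i) (a i') -> rweak_le L m (swap_adj a i).
Proof.
rewrite inE Si => Li /rweak_leP ma mi; apply/rweak_leP => x y Lxy.
case: (boolP ((x == a i) && (y == a i'))) => [/andP [/eqP-> /eqP->]|h1].
  by move/negbTE: mi => ->.
case: (boolP ((x == a i') && (y == a i))) => [/andP [/eqP ex /eqP ey]|h2].
  by move: Lxy; rewrite ex ey (negbTE (strict_total_asym HL Li)).
by rewrite precedes_swap_adj //; apply: ma.
Qed.

End AdjacentSwaps.

Lemma precedes_of_adjacent n (a m : {perm 'I_n}) :
  (forall k : 'I_n, k.+1 < n -> precedes m (a k) (a (ord_succ k))) ->
  forall u v, precedes a u v -> precedes m u v.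
Proof.
move=> adj u v auv; rewrite -[u](permKV a) -[v](permKV a).
have [_ trm _] := strict_total_precedes m.
apply: chain_adjacent auv _ => // k /andP [_ kv]; apply: adj.
exact: leq_ltn_trans kv (ltn_ord _).
Qed.

Lemma rweak_le_swap_adj_of_lt n (L : rel 'I_n) (m a : {perm 'I_n}) : strict_total L ->
  rweak_le L m a -> m != a ->
  exists2 i, i \in rdescents L a & rweak_le L m (swap_adj a i).
Proof.
move=> HL ma nma.
case: (pickP [pred i | (i \in rdescents L a) && rweak_le L m (swap_adj a i)]).
  by move=> i /andP [iD mi]; exists i.
move=> none; case/eqP: nma.
have adj (k : 'I_n) : k.+1 < n -> precedes m (a k) (a (ord_succ k)).
  move=> Sk; have [_ _ tot] := HL.
  have nk : a k != a (ord_succ k).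
    by rewrite (inj_eq perm_inj) -val_eqE /= ord_succE // neq_ltn ltnSn.
  case/orP: (tot _ _ nk) => Lk.
    have kD : k \in rdescents L a by rewrite inE Sk Lk.
    apply: contraFT (none k) => mk; rewrite /= kD.
    exact: rweak_le_swap_adj_below.
  have := strict_total_asym (strict_total_precedes a) (precedes_adj a Sk).
  rewrite (strict_total_negE (strict_total_precedes m) nk); apply: contra.
  by move/rweak_leP: ma => /(_ _ _ Lk).
apply: (rweak_le_anti HL ma); apply/rweak_leP => u v _.
exact: precedes_of_adjacent.
Qed.

Definition rqlt n (L : rel 'I_n) (X Y : {set {perm 'I_n}}) : bool :=
  (X != Y) && [exists x in X, exists y in Y, (x != y) && rweak_le L x y].

Definition rqcover n (L : rel 'I_n) (R : rel {perm 'I_n}) (Y X : {set {perm 'I_n}}) :=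
  [&& is_class R Y, is_class R X, rqlt L Y X &
      ~~ [exists Z, [&& is_class R Z, rqlt L Y Z & rqlt L Z X]]].

Lemma qlt_gt n (X Y : {set {perm 'I_n}}) : qlt X Y = rqlt (@ord_gt n) X Y.
Proof.
rewrite /qlt /rqlt; congr (_ && _); apply: eq_existsb => x; congr (_ && _).
by apply: eq_existsb => y; rewrite /weak_lt weak_le_gt.
Qed.

Lemma qlt_lt n (X Y : {set {perm 'I_n}}) : qlt X Y = rqlt (@ord_lt n) Y X.
Proof.
rewrite /qlt /rqlt eq_sym; congr (_ && _); apply/exists_inP/exists_inP.
- case=> x xX /exists_inP [y yY /andP [nxy xy]]; exists y => //; apply/exists_inP.
  by exists x; rewrite // eq_sym nxy rweak_le_lt.
- case=> y yY /exists_inP [x xX /andP [nyx yx]]; exists x => //; apply/exists_inP.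
  by exists y; rewrite // /weak_lt eq_sym nyx -rweak_le_lt.
Qed.

Lemma qcover_gt n (R : rel {perm 'I_n}) X Y : qcover R Y X = rqcover (@ord_gt n) R Y X.
Proof.
rewrite /qcover /rqcover qlt_gt; congr (_ && (_ && (_ && ~~ _))).
by apply: eq_existsb => Z; rewrite !qlt_gt.
Qed.

Lemma qcover_lt n (R : rel {perm 'I_n}) X Y : qcover R X Y = rqcover (@ord_lt n) R Y X.
Proof.
rewrite /qcover /rqcover qlt_lt andbCA; congr (_ && (_ && (_ && ~~ _))).
by apply: eq_existsb => Z; rewrite !qlt_lt; congr (_ && _); exact: andbC.
Qed.

Lemma cls_class n (R : rel {perm 'I_n}) x : is_class R (cls R x).
Proof. by apply/existsP; exists x. Qed.

Section Classes.
Variables (n : nat) (R : rel {perm 'I_n}).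
Hypotheses (Rrefl : reflexive R) (Rsym : symmetric R) (Rtrans : transitive R).

Lemma mem_cls x : x \in cls R x.
Proof. by rewrite inE. Qed.

Lemma cls_eq x y : R x y -> cls R x = cls R y.
Proof.
move=> Rxy; apply/setP => z; rewrite !inE; apply/idP/idP; last exact: Rtrans.
by apply: Rtrans; rewrite Rsym.
Qed.

Lemma class_mem X y : is_class R X -> y \in X -> X = cls R y.
Proof. by case/existsP=> x /eqP ->; rewrite inE; apply: cls_eq. Qed.

Lemma class_rel X x y : is_class R X -> x \in X -> y \in X -> R x y.
Proof. by move=> cX xX; rewrite (class_mem cX xX) inE. Qed.

End Classes.

Definition rmeet_compatible n (L : rel 'I_n) (R : rel {perm 'I_n}) : Prop :=
  forall x y z mx my, R x y -> is_lub (fun a b => rweak_le L b a) x z mx ->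
    is_lub (fun a b => rweak_le L b a) y z my -> R mx my.

Section LowerCovers.
Variables (n : nat) (L : rel 'I_n) (R : rel {perm 'I_n}).
Hypotheses (HL : strict_total L) (Rrefl : reflexive R) (Rsym : symmetric R).
Hypotheses (Rtrans : transitive R) (Rmeet : rmeet_compatible L R).

Lemma is_rmeet_le x y : rweak_le L y x -> is_lub (fun a b => rweak_le L b a) x y y.
Proof. by split=> //; apply: rweak_le_refl. Qed.

Lemma class_rmin X : is_class R X ->
  exists2 a, a \in X & forall y, y \in X -> rweak_le L a y.
Proof.
case/existsP=> x0 /eqP eX; have x0X : x0 \in X by rewrite eX mem_cls.
case: (arg_minnP (fun a => #|rinv_set L a|) x0X) => a aX amin.
exists a => // y yX; have [m [my ma mglb]] := rmeet_ex y a HL.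
have Ram : R a m.
  apply: Rmeet (class_rel Rsym Rtrans _ aX yX) (is_rmeet_le (rweak_le_refl _ _)) _.
  - by rewrite eX cls_class.
  - by split.
have mX : m \in X by rewrite (class_mem Rsym Rtrans _ aX) ?inE // eX cls_class.
have -> : a = m.
  by apply: (rinv_set_inj HL); apply/esym/eqP; rewrite eqEcard [_ \subset _]ma amin.
exact: my.
Qed.

(** The meet [m] of [a] with an element of [Y] lies in [Y]; undoing a descent of
   [a] that [m] keeps reversed gives a class between [Y] and [X], hence [Y]. *)
Lemma rqcover_swap_adj (X Y : {set {perm 'I_n}}) a :
  a \in X -> (forall y, y \in X -> rweak_le L a y) -> rqcover L R Y X ->
  exists2 i, i \in rdescents L a & Y = cls R (swap_adj a i).
Proof.
move=> aX amin /and4P [cY cX /andP [nYX]].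
case/exists_inP=> y yY /exists_inP [x xX /andP [nyx yx]] nocover.
have [m [ma my mglb]] := rmeet_ex a y HL.
have Rym : R y m.
  apply: Rmeet (class_rel Rsym Rtrans cX xX aX) (is_rmeet_le yx) _.
  by split.
have eY : Y = cls R m by rewrite (class_mem Rsym Rtrans cY yY) (cls_eq Rsym Rtrans Rym).
have eX : X = cls R a := class_mem Rsym Rtrans cX aX.
have nma : m != a by apply: contraNneq nYX => ema; rewrite eY eX ema.
have [i iD mc] := rweak_le_swap_adj_of_lt HL ma nma; exists i => //.
have Si : i.+1 < n by move: iD; rewrite inE => /andP [].
set c := swap_adj a i; have ca : rweak_le L c a := rweak_le_swap_adj Si HL iD.
apply: contraNeq nocover => nYc; apply/existsP; exists (cls R c).
rewrite cls_class /rqlt nYc /=; apply/andP; split.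
  apply/exists_inP; exists m; first by rewrite eY mem_cls.
  apply/exists_inP; exists c; first exact: mem_cls.
  by rewrite mc andbT; apply: contraNneq nYc => <-; rewrite eY.
have nca : c != a := swap_adj_neq a Si.
apply/andP; split.
  apply: contraNneq nca => ecX; apply/eqP/(rweak_le_anti HL ca); apply: amin.
  by rewrite -ecX mem_cls.
apply/exists_inP; exists c; first exact: mem_cls.
by apply/exists_inP; exists a; rewrite // nca.
Qed.

Lemma card_rqcover_le (X : {set {perm 'I_n}}) a : a \in X ->
  (forall y, y \in X -> rweak_le L a y) ->
  #|[set Y | rqcover L R Y X]| <= #|rdescents L a|.
Proof.
move=> aX amin; apply: leq_trans (leq_imset_card (fun i => cls R (swap_adj a i)) _).
apply/subset_leq_card/subsetP => Y; rewrite inE => /(rqcover_swap_adj aX amin).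
by case=> i iD ->; apply: imset_f.
Qed.

End LowerCovers.

(** * The upper bound *)

Lemma chain_no_rdescents n (L : rel 'I_n) (s : {perm 'I_n}) : strict_total L ->
  forall p q : 'I_n, (p < q)%N ->
  (forall k : 'I_n, (p <= k < q)%N -> k \notin rdescents L s) -> L (s q) (s p).
Proof.
move=> HL p q pq none; have [_ trL tot] := HL.
have [_ trF _] := strict_total_flip HL.
apply: (chain_adjacent trF pq) => k kpq.
have Sk : k.+1 < n.
  by case/andP: kpq => _ kq; apply: leq_ltn_trans kq (ltn_ord q).
have nk : s k != s (ord_succ k).
  by rewrite (inj_eq perm_inj) -val_eqE /= ord_succE // neq_ltn ltnSn.
by case/orP: (tot _ _ nk) => // Lk; have := none _ kpq; rewrite inE Sk Lk.
Qed.

Definition count_below n (S : {set 'I_n}) (p : nat) : nat :=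
  #|[set i in S | (i < p)%N]|.

Lemma count_below_le n (S : {set 'I_n}) p : count_below S p <= #|S|.
Proof. by apply/subset_leq_card/subsetP => i; rewrite inE => /andP []. Qed.

Lemma count_below_eq n (S : {set 'I_n}) (p q : nat) : (p <= q)%N ->
  count_below S p = count_below S q ->
  forall i : 'I_n, (p <= i < q)%N -> i \notin S.
Proof.
move=> pq e i /andP [pi iq]; apply/negP => iS.
have sub : [set i in S | (i < p)%N] \subset [set i in S | (i < q)%N].
  by apply/subsetP => j; rewrite !inE => /andP [-> /leq_trans]; apply.
have eqs : [set i in S | (i < p)%N] = [set i in S | (i < q)%N].
  by apply/eqP; rewrite eqEcard sub /=; move: e; rewrite /count_below => ->.
have : i \in [set i in S | (i < q)%N] by rewrite inE iS iq.
by rewrite -eqs inE ltnNge pi andbF.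
Qed.

(** Group the values by the number of ascents of [a], and of descents of [b],
   to their left.  Within a group [a] decreases and [b] increases, which is
   impossible for two values since every inversion of [a] is one of [b]. *)
Lemma runs_bound n (a b : {perm 'I_n}) : weak_le a b ->
  n <= (#|rdescents (@ord_lt n) a|).+1 * (#|rdescents (@ord_gt n) b|).+1.
Proof.
move=> ab; set Da := rdescents _ a; set Db := rdescents _ b.
have same_group u v : precedes a u v ->
    count_below Da (a^-1%g u) = count_below Da (a^-1%g v) ->
    count_below Db (b^-1%g u) = count_below Db (b^-1%g v) -> False.
  move=> auv ea eb.
  have := chain_no_rdescents (strict_total_ord_lt n) auv (count_below_eq (ltnW auv) ea).
  rewrite /ord_lt !permKV => vu.
  have buv : precedes b u v by move: ab; rewrite weak_le_gt => /rweak_leP; apply.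
  have := chain_no_rdescents (strict_total_ord_gt n) buv (count_below_eq (ltnW buv) eb).
  by rewrite /ord_gt !permKV ltnNge (ltnW vu).
pose g v : 'I_#|Da|.+1 * 'I_#|Db|.+1 :=
  (inord (count_below Da (a^-1%g v)), inord (count_below Db (b^-1%g v))).
suff g_inj : injective g by have := leq_card g g_inj; rewrite card_prod !card_ord.
move=> u v [] /(congr1 val) + /(congr1 val).
rewrite /= !inordK ?ltnS ?count_below_le //.
move=> ea eb; case: (eqVneq u v) => // nuv; exfalso.
have : a^-1%g u != a^-1%g v by rewrite (inj_eq perm_inj).
rewrite -val_eqE neq_ltn => /orP [auv|avu].
- exact: same_group auv ea eb.
- exact: same_group avu (esym ea) (esym eb).
Qed.

Lemma card_descents_ascents n (a : {perm 'I_n}) :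
  #|rdescents (@ord_gt n) a| + #|rdescents (@ord_lt n) a| <= n.-1.
Proof.
rewrite -cardsUI.
have -> : rdescents (@ord_gt n) a :&: rdescents (@ord_lt n) a = set0.
  apply/setP => i; rewrite !inE /ord_gt /ord_lt.
  apply/negbTE/negP => /andP [/andP [_ lt1] /andP [_ /(ltn_trans lt1)]].
  by rewrite ltnn.
rewrite cards0 addn0 -(card_ord_lt (leq_pred n)).
apply/subset_leq_card/subsetP => i; rewrite !inE -!andb_orr => /andP [Si _].
by rewrite -ltnS prednK // (leq_ltn_trans _ Si).
Qed.

Lemma ceil_2sqrtP n : 4 * n <= ceil_2sqrt n * ceil_2sqrt n.
Proof. by rewrite /ceil_2sqrt; case: ex_minnP. Qed.

Lemma ceil_2sqrt_le n k : 4 * n <= k * k -> ceil_2sqrt n <= k.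
Proof. by rewrite /ceil_2sqrt; case: ex_minnP => c _; apply. Qed.

Lemma ceil_2sqrt_le_add n a b : n <= a * b -> ceil_2sqrt n <= a + b.
Proof.
move=> nab; apply: ceil_2sqrt_le; rewrite mulnn.
by apply: leq_trans (nat_AGM2 a b); rewrite leq_mul2l.
Qed.

Lemma qdeg_le n (R : rel {perm 'I_n}) (X : {set {perm 'I_n}}) : 0 < n ->
  lattice_congruence R -> is_class R X -> qdeg R X <= 2 * n - ceil_2sqrt n.
Proof.
move=> n0 [Rrefl Rsym Rtrans Rjoin Rmeet] cX.
have meet_gt : rmeet_compatible (@ord_gt n) R.
  have e u v : weak_le v u = rweak_le (@ord_gt n) v u by rewrite weak_le_gt.
  move=> x y z mx my Rxy /(eq_is_lub _ _ _ e) hx /(eq_is_lub _ _ _ e) hy.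
  exact: Rmeet Rxy hx hy.
have meet_lt : rmeet_compatible (@ord_lt n) R.
  have e u v : weak_le u v = rweak_le (@ord_lt n) v u by rewrite rweak_le_lt.
  move=> x y z mx my Rxy /(eq_is_lub _ _ _ e) hx /(eq_is_lub _ _ _ e) hy.
  exact: Rjoin Rxy hx hy.
have [a aX amin] := class_rmin (strict_total_ord_gt n) Rrefl Rsym Rtrans meet_gt cX.
have [b bX bmax] := class_rmin (strict_total_ord_lt n) Rrefl Rsym Rtrans meet_lt cX.
have degE : qdeg R X <= #|[set Y | rqcover (@ord_lt n) R Y X]|
                        + #|[set Y | rqcover (@ord_gt n) R Y X]|.
  rewrite /qdeg; apply: leq_trans (leq_card_setU _ _); apply/subset_leq_card.
  by apply/subsetP => Y; rewrite !inE qcover_lt qcover_gt.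
have up := card_rqcover_le (strict_total_ord_lt n) Rrefl Rsym Rtrans meet_lt bX bmax.
have down := card_rqcover_le (strict_total_ord_gt n) Rrefl Rsym Rtrans meet_gt aX amin.
have ab : weak_le a b by rewrite weak_le_gt amin.
have := ceil_2sqrt_le_add (runs_bound ab).
have := card_descents_ascents a; have := card_descents_ascents b.
lia.
Qed.

(** * The congruence of short inversions *)

Section JoinWindow.
Variables (n : nat) (L T : rel 'I_n).
Hypotheses (HL : strict_total L) (Trefl : reflexive T).
Hypothesis Tconvex : forall u v w, T u w -> L u v -> L v w -> T u v && T v w.

Lemma path_join_edge_window x y z :
  (forall u v, T u v -> L u v -> precedes x u v = precedes y u v) ->
  forall p u, path (join_edge L x z) u p -> T u (last u p) ->
  path (join_edge L y z) u p.
Proof.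
have [_ trL _] := HL; move=> xy; elim=> [|w p IH] u //= /andP [Euw pw] Tul.
have Luw : L u w by case/andP: Euw.
have Eline : subrel (join_edge L x z) L by move=> ? ? /andP [].
have /andP [Tuw Twl] : T u w && T w (last w p).
  case: (path_last_rel trL Eline pw) => [ew|Lwl].
  - by rewrite -ew in Tul *; rewrite Tul Trefl.
  - exact: Tconvex Tul Luw Lwl.
by rewrite (IH _ pw Twl) andbT /join_edge Luw -(xy _ _ Tuw Luw); case/andP: Euw.
Qed.

(** Joins are computed by paths that stay inside the [T]-window spanned by their
   ends, so two permutations agreeing on [T]-close pairs have joins with a third
   one that agree on such pairs too. *)
Lemma rjoin_window x y z jx jy :
  (forall u v, T u v -> L u v -> precedes x u v = precedes y u v) ->
  is_lub (rweak_le L) x z jx -> is_lub (rweak_le L) y z jy ->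
  forall u v, T u v -> L u v -> precedes jx u v = precedes jy u v.
Proof.
move=> xy jxlub jylub u v Tuv Luv.
rewrite (rjoin_precedes HL jxlub Luv) (rjoin_precedes HL jylub Luv).
have yx u' v' : T u' v' -> L u' v' -> precedes y u' v' = precedes x u' v'.
  by move=> ? ?; rewrite xy.
apply/connectP/connectP => -[p pp ev]; exists p => //.
- by apply: (path_join_edge_window xy pp); rewrite -ev.
- by apply: (path_join_edge_window yx pp); rewrite -ev.
Qed.

End JoinWindow.

Definition near n (q : nat) : rel 'I_n := fun u v => (u <= v + q) && (v <= u + q).

Definition short_inv n (q : nat) (x : {perm 'I_n}) : {set 'I_n * 'I_n} :=
  inv_set x :&: [set p | near q p.1 p.2].

Definition short_inv_cong n (q : nat) : rel {perm 'I_n} :=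
  fun x y => short_inv q x == short_inv q y.

Section ShortInversions.
Variables (n q : nat).
Implicit Types (x y : {perm 'I_n}) (u v : 'I_n).
Local Notation R := (@short_inv_cong n q).

Lemma mem_short_inv x u v :
  ((u, v) \in short_inv q x) = [&& (v < u)%N, precedes x u v & near q u v].
Proof. by rewrite /short_inv inv_set_gt !inE andbA. Qed.

Lemma near_sym u v : near q u v = near q v u.
Proof. by rewrite /near andbC. Qed.

Lemma precedes_short_inv x y : short_inv q x = short_inv q y ->
  forall u v, near q u v -> precedes x u v = precedes y u v.
Proof.
move=> e u v Tuv; move/setP: e => e.
case: (ltngtP u v) => [uv|vu|/val_inj ->]; last by rewrite /precedes !ltnn.
- have nuv : u != v by rewrite -val_eqE /= ltn_eqF.
  rewrite !(strict_total_negE (strict_total_precedes _) nuv); congr (~~ _).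
  by have := e (v, u); rewrite !mem_short_inv uv near_sym Tuv !andbT.
- by have := e (u, v); rewrite !mem_short_inv vu Tuv !andbT.
Qed.

Lemma short_inv_precedes x y :
  (forall u v, near q u v -> (v < u)%N -> precedes x u v = precedes y u v) ->
  short_inv q x = short_inv q y.
Proof.
move=> h; apply/setP => -[u v]; rewrite !mem_short_inv.
case: (boolP (v < u)%N) => //= vu.
by case: (boolP (near q u v)) => Tuv; rewrite ?andbF ?andbT ?h.
Qed.

Lemma short_inv_cong_equiv : [/\ reflexive R, symmetric R & transitive R].
Proof.
split=> [x|x y|y x z]; rewrite /short_inv_cong ?eqxx // 1?eq_sym //.
by move=> /eqP -> /eqP ->.
Qed.

Lemma near_refl : reflexive (@near n q).
Proof. by move=> u; rewrite /near leq_addr. Qed.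

Lemma lattice_congruence_short_inv : lattice_congruence R.
Proof.
have [Rrefl Rsym Rtrans] := short_inv_cong_equiv.
have convex_gt u v w :
    near q u w -> ord_gt u v -> ord_gt v w -> near q u v && near q v w.
  by rewrite /near /ord_gt => /andP [? ?] ? ?; rewrite -!(rwP andP); lia.
have convex_lt u v w :
    near q u w -> ord_lt u v -> ord_lt v w -> near q u v && near q v w.
  by rewrite /near /ord_lt => /andP [? ?] ? ?; rewrite -!(rwP andP); lia.
have agree x y (L : rel 'I_n) :
    R x y -> forall u v, near q u v -> L u v -> precedes x u v = precedes y u v.
  by move=> /eqP Rxy u v Tuv _; apply: precedes_short_inv.
split=> // x y z jx jy Rxy.
- move=> /(eq_is_lub _ _ _ (@weak_le_gt n)) hx /(eq_is_lub _ _ _ (@weak_le_gt n)) hy.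
  apply/eqP/short_inv_precedes => u v Tuv vu.
  exact: (rjoin_window (strict_total_ord_gt n) near_refl convex_gt
                       (agree _ _ _ Rxy) hx hy).
- have e a b : weak_le b a = rweak_le (@ord_lt n) a b by rewrite rweak_le_lt.
  move=> /(eq_is_lub _ _ _ e) hx /(eq_is_lub _ _ _ e) hy.
  apply/eqP/short_inv_precedes => u v Tuv vu.
  have nuv : u != v by rewrite -val_eqE /= gtn_eqF.
  rewrite !(strict_total_negE (strict_total_precedes _) nuv); congr (~~ _).
  apply: (rjoin_window (strict_total_ord_lt n) near_refl convex_lt
                        (agree _ _ _ Rxy) hx hy) => //.
  by rewrite near_sym.
Qed.

End ShortInversions.

Section ShortInversionCovers.
Variables (n q : nat).
Implicit Types (x y : {perm 'I_n}).
Local Notation R := (@short_inv_cong n q).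

Lemma cls_short_inv x y : cls R x = cls R y -> short_inv q x = short_inv q y.
Proof.
have [Rrefl _ _] := short_inv_cong_equiv n q.
by move=> e; move: (mem_cls Rrefl y); rewrite -e inE => /eqP.
Qed.

Lemma qlt_short_inv x y :
  qlt (cls R x) (cls R y) -> #|short_inv q x| < #|short_inv q y|.
Proof.
have [_ Rsym Rtrans] := short_inv_cong_equiv n q.
case/andP=> ne /exists_inP [x' x'X /exists_inP [y' y'Y /andP [_ le]]].
move: x'X y'Y; rewrite !inE => /eqP ex /eqP ey.
apply: proper_card; rewrite properEneq ex ey setSI ?andbT //.
apply: contraNneq ne => e; apply/eqP/(cls_eq Rsym Rtrans).
by rewrite /short_inv_cong ex ey e.
Qed.

Lemma qcover_short_inv x y : weak_le x y ->
  #|short_inv q y| = (#|short_inv q x|).+1 -> qcover R (cls R x) (cls R y).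
Proof.
move=> le ec; have nxy : x != y by apply/eqP => exy; move: ec; rewrite exy; lia.
rewrite /qcover !cls_class /=; apply/andP; split.
  apply/andP; split.
    by apply/eqP => /cls_short_inv exy; move: ec; rewrite exy; lia.
  have [Rrefl _ _] := short_inv_cong_equiv n q.
  apply/exists_inP; exists x; first exact: mem_cls.
  by apply/exists_inP; exists y; [exact: mem_cls | rewrite /weak_lt nxy].
apply/existsP => -[Z /and3P [/existsP [z /eqP ->]]].
move=> /qlt_short_inv lt1 /qlt_short_inv.
by rewrite ec ltnS leqNgt lt1.
Qed.

Lemma qcover_short_inv_asym X Y : qcover R X Y -> ~~ qcover R Y X.
Proof.
case/and4P=> /existsP [x /eqP ->] /existsP [y /eqP ->] /qlt_short_inv lt1 _.
by apply/negP => /and4P [_ _ /qlt_short_inv lt2 _]; move: lt1; rewrite ltnNge ltnW.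
Qed.

Lemma qdeg_short_inv X :
  qdeg R X = #|[set Y | qcover R Y X]| + #|[set Y | qcover R X Y]|.
Proof.
have disj : [set Y | qcover R Y X] :&: [set Y | qcover R X Y] = set0.
  apply/setP => Y; rewrite !inE; apply/negbTE/negP => /andP [YX XY].
  by have := qcover_short_inv_asym XY; rewrite YX.
rewrite -cardsUI disj cards0 addn0 /qdeg.
by apply: eq_card => Y; rewrite !inE orbC.
Qed.

End ShortInversionCovers.

Lemma precedes_next n (s : {perm 'I_n}) x y : precedes s x y ->
  (forall w, ~~ (precedes s x w && precedes s w y)) ->
  (s^-1%g x).+1 < n /\ s (ord_succ (s^-1%g x)) = y.
Proof.
rewrite /precedes => xy between.
have Sx : (s^-1%g x).+1 < n := leq_ltn_trans xy (ltn_ord _).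
split=> //; rewrite -[y](permKV s); congr (s _).
apply: val_inj; rewrite /= ord_succE //.
apply/eqP; rewrite eqn_leq xy /= leqNgt; apply/negP => Sxy.
have := between (s (ord_succ (s^-1%g x))).
by rewrite /precedes permK ord_succE // ltnSn Sxy.
Qed.

Section ShortInversionSwaps.
Variables (n q : nat) (s : {perm 'I_n}) (x y : 'I_n).
Hypothesis sxy : precedes s x y.
Hypothesis next : forall w, ~~ (precedes s x w && precedes s w y).

Local Notation c := (swap_adj s (s^-1%g x)).

Lemma swap_next_below : (y < x)%N -> near q x y ->
  [/\ weak_le c s, short_inv q c = short_inv q s :\ (x, y)
    & (x, y) \in short_inv q s].
Proof.
move=> yx Txy; have [Si ey] := precedes_next sxy next.
set i := s^-1%g x in Si ey *; have ex : s i = x := permKV s x.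
have iD : i \in rdescents (@ord_gt n) s by rewrite inE Si ex ey.
split.
- by rewrite weak_le_gt; apply: rweak_le_swap_adj (strict_total_ord_gt n) iD.
- apply/setP => -[u v]; rewrite in_setD1 !mem_short_inv -ex -ey.
  have [[-> ->]|ne] := eqVneq (u, v) (s i, s (ord_succ i)).
    by rewrite precedes_swap_adj_pair // andbF.
  case: (boolP ((u == s (ord_succ i)) && (v == s i))) => [/andP [/eqP-> /eqP->]|h2].
    by rewrite ex ey ltnNge (ltnW yx).
  by rewrite precedes_swap_adj.
- by rewrite mem_short_inv yx sxy Txy.
Qed.

Lemma swap_next_above : (x < y)%N -> near q y x ->
  [/\ weak_le s c, short_inv q c = (y, x) |: short_inv q s
    & (y, x) \notin short_inv q s].
Proof.
move=> xy Tyx; have [Si ey] := precedes_next sxy next.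
set i := s^-1%g x in Si ey *; have ex : s i = x := permKV s x.
have iD : i \in rdescents (@ord_lt n) s by rewrite inE Si ex ey.
have nyx : y != x by rewrite -val_eqE /= gtn_eqF.
split.
- by rewrite -rweak_le_lt; apply: rweak_le_swap_adj (strict_total_ord_lt n) iD.
- apply/setP => -[u v]; rewrite in_setU1 !mem_short_inv -ex -ey.
  have [[-> ->]|ne] := eqVneq (u, v) (s (ord_succ i), s i).
    rewrite ex ey xy Tyx (strict_total_negE (strict_total_precedes _) nyx).
    by rewrite -ex -ey precedes_swap_adj_pair.
  case: (boolP ((u == s i) && (v == s (ord_succ i)))) => [/andP [/eqP-> /eqP->]|h1].
    by rewrite ex ey ltnNge (ltnW xy).
  by rewrite precedes_swap_adj.
- have syx := strict_total_asym (strict_total_precedes s) sxy.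
  by rewrite mem_short_inv (negbTE syx) andbF.
Qed.

End ShortInversionSwaps.

(** * The lower bound *)

Definition lex_order (T K : eqType) (f : T -> K) (LK : rel K) (L : rel T) : rel T :=
  fun u v => LK (f u) (f v) || (f u == f v) && L u v.

Lemma strict_total_lex (T K : eqType) (f : T -> K) (LK : rel K) (L : rel T) :
  strict_total LK -> strict_total L -> strict_total (lex_order f LK L).
Proof.
case=> irrK trK totK [irr tr tot]; split=> [u|v u w|u v nuv]; rewrite /lex_order.
- by rewrite irrK irr andbF.
- case/orP=> [Kuv|/andP [/eqP-> Luv]] /orP [Kvw|/andP [/eqP<- Lvw]].
  + by rewrite (trK _ _ _ Kuv Kvw).
  + by rewrite Kuv.
  + by rewrite Kvw.
  + by rewrite eqxx (tr _ _ _ Luv Lvw) orbT.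
- have [e|ne] := eqVneq (f u) (f v); first by rewrite e irrK /=; apply: tot.
  by case/orP: (totK _ _ ne) => ->; rewrite ?orbT.
Qed.

Lemma strict_total_ltn : strict_total ltn.
Proof.
split=> [u|v u w|u v]; [exact: ltnn | exact: ltn_trans | by rewrite neq_ltn].
Qed.

(** Blocks [[kq, kq + q)] in increasing order, each one listed decreasingly. *)
Definition block_order n (q : nat) : rel 'I_n :=
  lex_order (fun u : 'I_n => u %/ q) ltn (@ord_gt n).

(** Residues mod [q] in decreasing order, each class listed increasingly. *)
Definition residue_order n (q : nat) : rel 'I_n :=
  lex_order (fun u : 'I_n => u %% q) (fun a b => b < a) (@ord_lt n).

Lemma strict_total_block_order n q : strict_total (@block_order n q).
Proof. exact: strict_total_lex strict_total_ltn (strict_total_ord_gt n). Qed.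

Lemma strict_total_residue_order n q : strict_total (@residue_order n q).
Proof.
exact: strict_total_lex (strict_total_flip strict_total_ltn) (strict_total_ord_lt n).
Qed.

Lemma divn_eq_near q u v : 0 < q -> v < u -> u <= v + q ->
  (u %/ q == v %/ q) = (v %% q < u %% q).
Proof.
move=> q0 vu uvq; rewrite {1 2}(divn_eq u q) {1 2}(divn_eq v q) in vu uvq.
have := ltn_pmod u q0; have := ltn_pmod v q0.
have : v %/ q <= u %/ q by apply: leq_div2r; lia.
move: (u %/ q) (v %/ q) (u %% q) (v %% q) vu uvq => U V a b vu uvq VU bq aq.
case: (eqVneq U V) => [eUV|/eqP UV]; first by subst; lia.
have : V.+1 * q <= U * q by rewrite leq_mul2r; lia.
lia.
Qed.

Lemma modn_eq_gap q v w : 0 < q -> w %% q = v %% q -> v < w -> v + q <= w.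
Proof.
move=> q0 e vw; rewrite (divn_eq w q) (divn_eq v q) e in vw *.
have lt : v %/ q < w %/ q by move: vw; rewrite ltn_add2r ltn_mul2r q0.
have : (v %/ q).+1 * q <= w %/ q * q by rewrite leq_mul2r lt orbT.
by rewrite mulSn; lia.
Qed.

Lemma card_shiftable n q : n - q <= #|[set v : 'I_n | v + q < n]|.
Proof.
have [nq|qn] := leqP n q; first by have -> : n - q = 0 by lia.
rewrite -[X in X <= _](card_ord_lt (leq_subr q n)); apply/subset_leq_card/subsetP.
by move=> v; rewrite !inE; lia.
Qed.

(** The values [u] whose successor lies in the same block: only the last value of
   each block fails, and there are at most [p] blocks. *)
Lemma card_block_interior n p q : 0 < q -> n <= p * q ->
  n - p <= #|[set u : 'I_n | (u.+1 < n) && ((u %% q).+1 < q)]|.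
Proof.
move=> q0 npq; set U := [set u | _].
have [np|pn] := leqP n p; first by have -> : n - p = 0 by lia.
suff : #|~: U| <= p by rewrite cardsCs setCK card_ord; lia.
have blk_lt (u : 'I_n) : u %/ q < n by apply: leq_ltn_trans (leq_div u q) (ltn_ord u).
pose g (u : 'I_n) : 'I_n := Ordinal (blk_lt u).
have last_of_block (u v : 'I_n) : u \notin U -> u < v -> u %/ q != v %/ q.
  rewrite inE negb_and -!leqNgt => uU uv; apply/eqP => e.
  have du := divn_eq u q; have dv := divn_eq v q; rewrite e in du.
  have vn := ltn_ord v; have bq := ltn_pmod v q0.
  move: (v %/ q * q) (u %% q) (v %% q) du dv uU bq => K a b du dv uU bq.
  by case/orP: uU; lia.
apply: (@leq_trans #|[pred i : 'I_n | i < p]|); last by rewrite card_ord_lt // ltnW.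
apply: (card_le_in_inj (F := g)) => [u v uU vU /(congr1 val) /= e|u _].
  rewrite !in_setC in uU vU; apply: val_inj; case: (ltngtP u v) => // [uv|vu].
  - by move: (last_of_block u v uU uv); rewrite e eqxx.
  - by move: (last_of_block v u vU vu); rewrite e eqxx.
by rewrite inE /= ltn_divLR // (leq_trans (ltn_ord u)).
Qed.

Lemma divn_succ q u : (u %% q).+1 < q -> u.+1 %/ q = u %/ q.
Proof.
move=> uq; have q0 : 0 < q by apply: leq_ltn_trans uq.
by rewrite {1}(divn_eq u q) -addnS divnMDl // (divn_small uq) addn0.
Qed.

Section BlockResidue.
Variables (n q : nat) (a b : {perm 'I_n}).
Hypotheses (q0 : 0 < q) (ha : precedes a =2 @block_order n q).
Hypothesis hb : precedes b =2 @residue_order n q.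
Local Notation R := (@short_inv_cong n q).

Lemma short_inv_block_residue : short_inv q a = short_inv q b.
Proof.
apply: short_inv_precedes => u v /andP [uvq _] vu.
rewrite ha hb /block_order /residue_order /lex_order /ord_gt /ord_lt /=.
have -> : (u %/ q < v %/ q) = false.
  by apply/negbTE; rewrite -leqNgt leq_div2r // ltnW.
rewrite vu andbT (ltnNge u v) (ltnW vu) andbF orbF /=.
exact: divn_eq_near.
Qed.

Lemma block_swap (u : 'I_n) : let c := swap_adj a (a^-1%g (ord_succ u)) in
  u.+1 < n -> (u %% q).+1 < q ->
  [/\ weak_le c a, short_inv q c = short_inv q a :\ (ord_succ u, u)
    & (ord_succ u, u) \in short_inv q a].
Proof.
move=> c Su uq; have eu : ord_succ u = u.+1 :> nat by rewrite ord_succE.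
have blk := divn_succ uq.
apply: swap_next_below; rewrite ?eu //.
- by rewrite ha /block_order /lex_order /ord_gt /= eu blk ltnn eqxx ltnSn.
- move=> w; rewrite !ha /block_order /lex_order /ord_gt /= eu blk.
  case: (ltngtP (u %/ q) (w %/ q)) => //=; lia.
- by rewrite /near; apply/andP; split; lia.
Qed.

Lemma residue_swap (v w : 'I_n) : let d := swap_adj b (b^-1%g v) in
  w = v + q :> nat ->
  [/\ weak_le b d, short_inv q d = (w, v) |: short_inv q b
    & (w, v) \notin short_inv q b].
Proof.
move=> d ew; have res : w %% q = v %% q by rewrite ew modnDr.
apply: swap_next_above.
- by rewrite hb /residue_order /lex_order /ord_lt /= res ltnn eqxx ew /=; lia.
- move=> w'; rewrite !hb /residue_order /lex_order /ord_lt /= res; apply/negP.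
  case: (ltngtP (v %% q) (w' %% q)) => //= e /andP [vw' w'w].
  by have := modn_eq_gap q0 (esym e) vw'; lia.
- by rewrite ew; lia.
- by rewrite /near ew; apply/andP; split; lia.
Qed.

Lemma lower_covers_block p :
  n <= p * q -> n - p <= #|[set Y | qcover R Y (cls R a)]|.
Proof.
move=> npq; apply: leq_trans (card_block_interior q0 npq) _.
apply: (card_le_in_inj (F := fun u => cls R (swap_adj a (a^-1%g (ord_succ u))))).
  move=> u u'; rewrite !inE => /andP [Su uq] /andP [Su' uq'] /cls_short_inv.
  have [_ -> mu] := block_swap Su uq; have [_ -> _] := block_swap Su' uq'.
  by move/(setD1_inj mu) => -[_ ->].
move=> u; rewrite !inE => /andP [Su uq]; have [ca ec mu] := block_swap Su uq.
by apply: qcover_short_inv; rewrite // ec [LHS](cardsD1 (ord_succ u, u)) mu.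
Qed.

Lemma upper_covers_residue : n - q <= #|[set Y | qcover R (cls R b) Y]|.
Proof.
apply: leq_trans (card_shiftable n q) _.
apply: (card_le_in_inj (F := fun v => cls R (swap_adj b (b^-1%g v)))).
  move=> v v'; rewrite !inE => vq v'q /cls_short_inv.
  have [_ -> mv] := residue_swap (v := v) (w := Ordinal vq) erefl.
  have [_ -> _] := residue_swap (v := v') (w := Ordinal v'q) erefl.
  by move/(setU1_inj mv) => -[_ ->].
move=> v; rewrite !inE => vq.
have [bd ed mv] := residue_swap (v := v) (w := Ordinal vq) erefl.
by apply: qcover_short_inv; rewrite // ed cardsU1 mv.
Qed.

End BlockResidue.

Lemma qdeg_short_inv_ge n p q : 0 < q -> n <= p * q ->
  exists2 X, is_class (@short_inv_cong n q) X &
    (n - p) + (n - q) <= qdeg (@short_inv_cong n q) X.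
Proof.
move=> q0 npq; have [_ Rsym Rtrans] := short_inv_cong_equiv n q.
have [a ha] := precedes_surj (strict_total_block_order n q).
have [b hb] := precedes_surj (strict_total_residue_order n q).
have eab : cls (short_inv_cong q) a = cls (short_inv_cong q) b.
  by apply: cls_eq => //; apply/eqP; apply: short_inv_block_residue.
exists (cls (short_inv_cong q) a); first exact: cls_class.
rewrite qdeg_short_inv; apply: leq_add; first exact: lower_covers_block.
by rewrite eab; apply: upper_covers_residue.
Qed.

Lemma ceil_2sqrt_split n : 0 < n ->
  exists p q, [/\ 0 < q, n <= p * q & p + q = ceil_2sqrt n].
Proof.
move=> n0; have := ceil_2sqrtP n; set c := ceil_2sqrt n => hc.
exists c./2, (uphalf c); rewrite uphalf_half -[in RHS](odd_double_half c).
move: hc; rewrite -(odd_double_half c).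
by case: (odd c); move: (c./2) => k /= hc; split; nia.
Qed.

Theorem mainTheorem15 (n : nat) (hn : 1 <= n) :
  (forall R : rel {perm 'I_n}, lattice_congruence R ->
     forall X : {set {perm 'I_n}}, is_class R X ->
       qdeg R X <= 2 * n - ceil_2sqrt n) /\
  (exists R : rel {perm 'I_n}, lattice_congruence R /\
     exists X : {set {perm 'I_n}}, is_class R X /\
       qdeg R X = 2 * n - ceil_2sqrt n).
Proof.
split=> [R hR X cX|]; first exact: qdeg_le.
have [p [q [q0 npq epq]]] := ceil_2sqrt_split hn.
have [X cX degX] := qdeg_short_inv_ge q0 npq.
exists (short_inv_cong q); split; first exact: lattice_congruence_short_inv.
exists X; split=> //; apply/eqP.
rewrite eqn_leq (qdeg_le hn (lattice_congruence_short_inv n q) cX) /=.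
by move: degX; rewrite -epq; lia.
Qed.
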